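(* Let $n\geq 2$ and let $C$ be a $2$-null CRC in $G_n$ with covering radius $\rho\geq 2$, $c_1\leq 2$, $c_2=3$, and $\mathbf{0}\in C$. Then: (1) every cap contains at most one word of $C$; in particular $C$ contains at most $2n$ words of type $3100$; (2) every word of type $1100$ lying in $C_2$ is at distance two from exactly one word of weight four in $C$, and this word is of type $3100$.
   Context: $G_n$: vertex set $\mathbb{Z}^n$, $x\sim y$ iff $\sum_i|x_i-y_i|=1$; $d$ its distance; weight of $x$ is $d(x,\mathbf{0})$; $e_i$ is the $i$-th unit vector. For a code $C$ with covering radius $\rho$, $C_i=\{v:d(v,C)=i\}$. $C$ is a CRC if for all $i,j$ every vertex of $C_i$ has the same number $\alpha_{ij}$ of neighbours in $C_j$, with $\alpha_{ij}=0$ for $|i-j|>1$; $a_i=\alpha_{ii}$, $b_i=\alpha_{i,i+1}$, $c_i=\alpha_{i,i-1}$. $C$ is $r$-null if $a_0=\cdots=a_{r-1}=0$. The type of a word of weight at most four is the nonincreasing sequence of its four largest absolute entry values; type $1100$: exactly two entries $\pm1$, others $0$; type $3100$: one entry $\pm3$, one entry $\pm1$, others $0$. A cap is one of the $2n$ sets $\{\varepsilon 3e_i\pm e_j: j\in\{1,\ldots,n\}\setminus\{i\}\}$ for $i\in\{1,\ldots,n\}$, $\varepsilon\in\{1,-1\}$; the set of type $3100$ words is the disjoint union of the caps. *)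

From HB Require Import structures.
From mathcomp Require Import all_boot all_order all_algebra.
From mathcomp Require Import boolp.
Set Implicit Arguments. Unset Strict Implicit. Unset Printing Implicit Defensive.
Import Order.TTheory GRing.Theory Num.Theory.
Local Open Scope ring_scope.

(* Vertices of G_n : Z^n *)
Definition vec (n : nat) := {ffun 'I_n -> int}.

Definition unitv (n : nat) (i : 'I_n) : vec n := [ffun k => if k == i then 1 else 0].

Definition step (n : nat) (x : vec n) (i : 'I_n) (b : bool) : vec n :=
  if b then x + unitv i else x - unitv i.

(* graph distance of G_n (l1 distance) *)
Definition dist (n : nat) (x y : vec n) : nat := (\sum_(i < n) absz (x i - y i))%N.

Definition weight (n : nat) (x : vec n) : nat := dist x 0.

Definition code (n : nat) := vec n -> Prop.

(* d(x, C) = i, i.e. x \in C_i *)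
Definition in_layer (n : nat) (C : code n) (i : nat) (x : vec n) : Prop :=
  (exists c, C c /\ dist x c = i) /\ (forall c, C c -> (i <= dist x c)%N).

Definition covering_radius (n : nat) (C : code n) (rho : nat) : Prop :=
  (forall x, exists c, C c /\ (dist x c <= rho)%N) /\ (exists x, in_layer C rho x).

Definition nbr_count (n : nat) (C : code n) (j : nat) (x : vec n) : nat :=
  #|[set p : 'I_n * bool | `[< in_layer C j (step x p.1 p.2) >]]|.

Definition is_CRC (n : nat) (C : code n) (rho : nat) (alpha : nat -> nat -> nat) : Prop :=
  covering_radius C rho /\
  (forall i j x, (i <= rho)%N -> (j <= rho)%N -> in_layer C i x -> nbr_count C j x = alpha i j) /\
  (forall i j, (i <= rho)%N -> (j <= rho)%N -> (i.+1 < j)%N || (j.+1 < i)%N -> alpha i j = 0%N).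

Definition a_ (alpha : nat -> nat -> nat) (i : nat) : nat := alpha i i.
Definition b_ (alpha : nat -> nat -> nat) (i : nat) : nat := alpha i i.+1.
Definition c_ (alpha : nat -> nat -> nat) (i : nat) : nat := alpha i i.-1.

Definition r_null (alpha : nat -> nat -> nat) (r : nat) : Prop :=
  forall i, (i < r)%N -> a_ alpha i = 0%N.

Definition type1100 (n : nat) (x : vec n) : Prop :=
  exists i j : 'I_n, i != j /\ `|x i| = 1 /\ `|x j| = 1 /\
    (forall k, k != i -> k != j -> x k = 0).

Definition type3100 (n : nat) (x : vec n) : Prop :=
  exists i j : 'I_n, i != j /\ `|x i| = 3 /\ `|x j| = 1 /\
    (forall k, k != i -> k != j -> x k = 0).

Definition cap (n : nat) (i : 'I_n) (b : bool) : vec n -> Prop :=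
  fun x => exists (j : 'I_n) (s : bool), j != i /\
    x = step [ffun k => (if b then 3 else -3) * unitv i k] j s.

From HB Require Import structures.
From mathcomp Require Import all_boot all_order all_algebra.
From mathcomp Require Import boolp.
From mathcomp Require Import zify.
Set Implicit Arguments. Unset Strict Implicit. Unset Printing Implicit Defensive.
Import Order.TTheory GRing.Theory Num.Theory.
Local Open Scope ring_scope.

(* Only four intersection numbers are used: codewords are pairwise
   non-adjacent (a_0 = 0), so are the vertices of C_1 (a_1 = 0), a vertex of
   C_1 has at most c_1 <= 2 codeword neighbours and a vertex of C_2 has exactly
   c_2 = 3 neighbours in C_1.  Counting neighbours of vertices close to 0 with
   these rules shows first that C has no word of weight two (for +-e_k +-e_m in
   the plane n = 2 a separate count is needed).  Hence a type 1100 word x in C_2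
   has the unit vectors x - x_i e_i, x - x_j e_j as two of its three C_1
   neighbours; the third one, x + p, is adjacent to exactly one codeword, namely
   x + 2p, and p must be x_i e_i or x_j e_j, so that x + 2p is of type 3100.
   Finally, two codewords in one cap would give the C_2 vertex 2 eps e_i four
   neighbours in C_1. *)

Definition bsign (b : bool) : int := if b then 1 else -1.

Section Lattice.

Variable n : nat.
Implicit Types (u v x z : vec n) (i j : 'I_n) (b c : bool).

Lemma stepE v i b k : step v i b k = v k + (if k == i then bsign b else 0).
Proof. by rewrite /step /unitv; case: b; rewrite !ffunE; case: (k == i). Qed.

Lemma stepC v i b j c : step (step v i b) j c = step (step v j c) i b.
Proof. by apply/ffunP => k; rewrite !stepE addrAC. Qed.

Lemma stepK v i b : step (step v i b) i (~~ b) = v.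
Proof.
apply/ffunP => k; rewrite !stepE; case: (k == i); rewrite ?addr0 //.
by case: b; rewrite /bsign /= addrK.
Qed.

Lemma stepNK v i b : step (step v i (~~ b)) i b = v.
Proof. by rewrite -{2}(negbK b) stepK. Qed.

Lemma distxx v : dist v v = 0%N.
Proof. by rewrite /dist big1 // => i _; rewrite subrr. Qed.

Lemma distC u v : dist u v = dist v u.
Proof. by apply: eq_bigr => i _; rewrite -abszN opprB. Qed.

Lemma dist_triangle u v w : (dist u w <= dist u v + dist v w)%N.
Proof. by rewrite /dist -big_split /=; apply: leq_sum => i _; lia. Qed.

Lemma dist_eq0 u v : dist u v = 0%N -> u = v.
Proof.
move=> /eqP; rewrite /dist sum_nat_eq0 => /forallP uv; apply/ffunP => i.
by apply/eqP; rewrite -subr_eq0 -absz_eq0; exact: (implyP (uv i)).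
Qed.

Lemma dist_step v i b : dist v (step v i b) = 1%N.
Proof.
rewrite /dist (bigD1 i) //= big1 => [|k ki]; rewrite stepE.
  by rewrite eqxx opprD addNKr; case: b.
by rewrite (negbTE ki) addr0 subrr.
Qed.

Lemma distD1 x z i :
  dist x z = (absz (x i - z i)%R + \sum_(k < n | k != i) absz (x k - z k)%R)%N.
Proof. by rewrite /dist (bigD1 i). Qed.

Lemma dist_stepD1 x z i b : dist (step x i b) z =
  (absz (x i + bsign b - z i)%R + \sum_(k < n | k != i) absz (x k - z k)%R)%N.
Proof.
rewrite (distD1 _ _ i) stepE eqxx; congr (_ + _)%N.
by apply: eq_bigr => k ki; rewrite stepE (negbTE ki) addr0.
Qed.

Lemma dist_succ_step x z d : dist x z = d.+1 -> exists i b, dist (step x i b) z = d.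
Proof.
move=> xz; have [i xzi] : exists i, x i != z i.
  apply/existsP; apply: contraT => /existsPn xz_eq.
  suff : dist x z = 0%N by rewrite xz.
  by rewrite /dist big1 // => i _; move/negPn/eqP: (xz_eq i) ->; rewrite subrr.
exists i, (x i < z i); move: xz; rewrite dist_stepD1 (distD1 _ _ i).
by move: xzi; case: ltrP; rewrite /bsign => ? /eqP ?; lia.
Qed.

Lemma dist_eq1 x z : dist x z = 1%N -> exists i b, z = step x i b.
Proof. by move=> /dist_succ_step [i [b /dist_eq0 <-]]; exists i, b. Qed.

Lemma dist_eq2 x z : dist x z = 2%N -> exists i b j c, z = step (step x i b) j c.
Proof. by move=> /dist_succ_step [i [b /dist_eq1 [j [c ->]]]]; exists i, b, j, c. Qed.

Lemma weight0 : weight (0 : vec n) = 0%N.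
Proof. exact: distxx. Qed.

Lemma weight_step_le v i b : (weight (step v i b) <= (weight v).+1)%N.
Proof.
by have := dist_triangle (step v i b) v 0; rewrite [dist _ v]distC dist_step.
Qed.

Lemma weight_step2_le i b j c : (weight (step (step 0%R i b) j c) <= 2)%N.
Proof.
have := weight_step_le (step 0 i b) j c; have := weight_step_le 0 i b.
by rewrite weight0; lia.
Qed.

Lemma weight_step_away v i b : 0 <= v i * bsign b -> weight (step v i b) = (weight v).+1.
Proof.
rewrite /weight dist_stepD1 (distD1 _ _ i) !ffunE !subr0.
by rewrite /bsign; case: b; rewrite ?mulr1 ?mulrN1; lia.
Qed.

End Lattice.

Section WordTypes.

Variable n : nat.
Implicit Types (x : vec n) (i j : 'I_n).

Lemma absz1_bsign (z : int) : `|z| = 1 -> z = bsign (0 < z).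
Proof. by rewrite /bsign; case: ltrP; lia. Qed.

Lemma absz3_sign (z : int) : `|z| = 3 -> z = (if 0 < z then 3 else -3).
Proof. by case: ltrP; lia. Qed.

Lemma type1100_step2 x : type1100 x ->
  exists i j s t, i != j /\ x = step (step 0 i s) j t.
Proof.
move=> [i [j [ij [xi [xj x0]]]]]; exists i, j, (0 < x i), (0 < x j); split=> //.
apply/ffunP => k; rewrite !stepE ffunE.
have [->|ki] := eqVneq k i; first by rewrite (negbTE ij) add0r addr0; exact: absz1_bsign.
have [->|kj] := eqVneq k j; first by rewrite !add0r; exact: absz1_bsign.
by rewrite !addr0 x0.
Qed.

Lemma cap_centerE i b :
  [ffun k => (if b then 3 else -3) * unitv i k] = step (step (step (0 : vec n) i b) i b) i b.
Proof.
by apply/ffunP => k; rewrite !ffunE !stepE ffunE; case: (k == i); case: b; rewrite /bsign; lia.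
Qed.

Lemma type3100_cap x : type3100 x -> exists i b, cap i b x.
Proof.
move=> [i [j [ij [xi [xj x0]]]]]; exists i, (0 < x i), j, (0 < x j); split; first by rewrite eq_sym.
apply/ffunP => k; rewrite stepE !ffunE.
have [->|ki] := eqVneq k i; first by rewrite (negbTE ij) mulr1 addr0; exact: absz3_sign.
have [->|kj] := eqVneq k j; first by rewrite mulr0 add0r; exact: absz1_bsign.
by rewrite mulr0 add0r x0.
Qed.

Lemma type3100_step4 i j s t : i != j ->
  type3100 (step (step (step (step 0 i s) j t) i s) i s) /\
  weight (step (step (step (step 0 i s) j t) i s) i s) = 4%N.
Proof.
move=> ij; have ji : j != i by rewrite eq_sym.
split.
  exists i, j; rewrite !stepE !eqxx (negbTE ij) (negbTE ji) !ffunE; split=> //.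
  split; first by case: s.
  split; first by case: t.
  by move=> k ki kj; rewrite !stepE (negbTE ki) (negbTE kj) ffunE.
rewrite weight_step_away; last by rewrite !stepE eqxx (negbTE ij) ffunE; case: s.
rewrite weight_step_away; last by rewrite !stepE eqxx (negbTE ij) ffunE; case: s.
rewrite weight_step_away; last by rewrite !stepE (negbTE ji) ffunE; case: t.
by rewrite weight_step_away ?weight0 // ffunE mul0r.
Qed.

End WordTypes.

Section CardSeq.

Variables (T : finType) (A : {set T}) (s : seq T).

Lemma uniq_size_le_card : uniq s -> {subset s <= A} -> (size s <= #|A|)%N.
Proof. by move=> us sA; rewrite -(card_uniqP us); apply/subset_leq_card/subsetP. Qed.

Lemma set_sub_seq_of_card : uniq s -> {subset s <= A} -> (#|A| <= size s)%N ->
  {subset A <= s}.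
Proof.
move=> us sA As x; suff /eqP <- : [set y in s] == A by rewrite inE.
rewrite eqEcard cardsE (card_uniqP us) As andbT.
by apply/subsetP => y; rewrite inE; exact: sA.
Qed.

Lemma seq_sub_set_of_card : {subset A <= s} -> (size s <= #|A|)%N -> {subset s <= A}.
Proof.
move=> As sA x; suff /eqP -> : A == [set y in s] by rewrite inE.
rewrite eqEcard (leq_trans _ sA) ?andbT; first by apply/subsetP => y /As; rewrite inE.
by rewrite cardsE card_size.
Qed.

Lemma exists_notin_of_card : (size s < #|A|)%N -> exists2 x, x \in A & x \notin s.
Proof.
move=> sA; apply/exists_inP; apply: contraLR sA => /exists_inPn As.
rewrite -leqNgt (leq_trans _ (card_size s)) //.
by apply/subset_leq_card/subsetP => x /As /negbNE.
Qed.

End CardSeq.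

Lemma exists_other_ord n (i : 'I_n) : (1 < n)%N -> exists k : 'I_n, k != i.
Proof.
move=> n1; pose k0 := Ordinal (ltnW n1).
case: (eqVneq k0 i) => [<-|]; last by exists k0.
by exists (Ordinal n1); apply/eqP => /(congr1 val).
Qed.

Definition nbrs n (C : code n) (j : nat) (v : vec n) : {set 'I_n * bool} :=
  [set p | `[< in_layer C j (step v p.1 p.2) >]].

Lemma nbrsP n (C : code n) j v p :
  reflect (in_layer C j (step v p.1 p.2)) (p \in nbrs C j v).
Proof. by rewrite inE; apply: asboolP. Qed.

Lemma code_layer0 n (C : code n) v : C v -> in_layer C 0 v.
Proof. by move=> Cv; split=> //; exists v; rewrite distxx. Qed.

Lemma layer0_code n (C : code n) v : in_layer C 0 v -> C v.
Proof. by move=> [[w [Cw /dist_eq0 ->]] _]. Qed.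

Ltac case_bools :=
  repeat match goal with b : bool |- context [?c] => constr_eq b c; case: (b) => /= end.

Ltac neq_rewrite :=
  repeat match goal with
  | H : is_true (?a != ?b) |- context [?a == ?b] => rewrite (negbTE H)
  | H : is_true (?a != ?b) |- context [?b == ?a] => rewrite (eq_sym b a) (negbTE H)
  end.

Ltac dirs_uniq :=
  rewrite /= ?inE; neq_rewrite; rewrite ?xpair_eqE ?eqxx /=; neq_rewrite; by case_bools.

Ltac steps_eq :=
  apply/ffunP => ?; rewrite !stepE /bsign; case_bools; repeat (case: eqP => ?; subst); lia.

Section TwoNullCRC.

Variables (n : nat) (C : code n) (alpha : nat -> nat -> nat).
Hypothesis n_gt1 : (1 < n)%N.
Hypothesis code0 : C 0.
Hypothesis card_nbrs : forall i j x, (i <= 2)%N -> (j <= 2)%N ->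
  in_layer C i x -> #|nbrs C j x| = alpha i j.
Hypothesis a0 : alpha 0 0 = 0%N.
Hypothesis a1 : alpha 1 1 = 0%N.
Hypothesis c1 : (alpha 1 0 <= 2)%N.
Hypothesis c2 : alpha 2 1 = 3%N.

Implicit Types (u v w x : vec n) (i j k l m : 'I_n) (p q r : 'I_n * bool).

Lemma code_nbrs0 w : C w -> nbrs C 0 w = set0.
Proof. by move=> /code_layer0 Cw; apply: cards0_eq; rewrite (card_nbrs (i := 0)). Qed.

Lemma layer1_nbrs1 u : in_layer C 1 u -> nbrs C 1 u = set0.
Proof. by move=> u1; apply: cards0_eq; rewrite (card_nbrs (i := 1)). Qed.

Lemma card_layer1_nbrs0 u : in_layer C 1 u -> #|nbrs C 0 u| = alpha 1 0.
Proof. exact: card_nbrs. Qed.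

Lemma card_layer2_nbrs1 x : in_layer C 2 x -> #|nbrs C 1 x| = 3%N.
Proof. by move=> x2; rewrite (card_nbrs (i := 2)). Qed.

Lemma code_step_notin w i b : C w -> ~ C (step w i b).
Proof.
move=> Cw Cs; have : (i, b) \in nbrs C 0 w by apply/nbrsP; exact: code_layer0.
by rewrite code_nbrs0 ?inE.
Qed.

Lemma layer1_of_code_step v i b : C (step v i b) -> in_layer C 1 v.
Proof.
move=> Cs; have nCv : ~ C v by rewrite -(stepK v i b); exact: code_step_notin.
split=> [|w Cw]; first by exists (step v i b); rewrite dist_step.
by rewrite lt0n; apply/eqP => /dist_eq0 vw; apply: nCv; rewrite vw.
Qed.

Lemma code_step_layer1 w i b : C w -> in_layer C 1 (step w i b).
Proof. by move=> Cw; apply: (layer1_of_code_step (i := i) (b := ~~ b)); rewrite stepK. Qed.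

Lemma unit_layer1 i b : in_layer C 1 (step 0 i b).
Proof. exact: code_step_layer1. Qed.

Lemma layer1_step_notin_layer1 u i b : in_layer C 1 u -> ~ in_layer C 1 (step u i b).
Proof.
move=> u1 s1; have : (i, b) \in nbrs C 1 u by exact/nbrsP.
by rewrite layer1_nbrs1 ?inE.
Qed.

Lemma layer2_of_weight_le2 v i b :
  ~ C v -> in_layer C 1 (step v i b) -> (weight v <= 2)%N -> in_layer C 2 v.
Proof.
move=> nCv s1 wv; have far w : C w -> (2 <= dist v w)%N.
  move=> Cw; case vw: (dist v w) => [|[|//]]; exfalso.
  - by move/dist_eq0: vw => vw; apply: nCv; rewrite vw.
  - move/dist_eq1: vw Cw => [j [c ->]] Cw.
    apply: (layer1_step_notin_layer1 (i := i) (b := ~~ b) s1).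
    by rewrite stepK; exact: layer1_of_code_step Cw.
split=> //; exists 0; split=> //.
by apply/eqP; rewrite eqn_leq far // andbT.
Qed.

Lemma step2_layer2 i b j c :
  ~ C (step (step 0 i b) j c) -> in_layer C 2 (step (step 0 i b) j c).
Proof.
move=> nC; apply: (layer2_of_weight_le2 (i := j) (b := ~~ c) nC).
  by rewrite stepK; exact: unit_layer1.
exact: weight_step2_le.
Qed.

Lemma layer1_code_nbrs_eq2 u p q : in_layer C 1 u -> p != q ->
  C (step u p.1 p.2) -> C (step u q.1 q.2) -> alpha 1 0 = 2%N.
Proof.
move=> u1 pq Cp Cq; apply/eqP; rewrite eqn_leq c1 -(card_layer1_nbrs0 u1) /=.
apply: (uniq_size_le_card (s := [:: p; q])); first by rewrite /= inE pq.
by move=> r; rewrite mem_seq2 => /orP [] /eqP ->; apply/nbrsP/code_layer0.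
Qed.

Lemma layer1_code_nbrs u p q r : in_layer C 1 u -> p != q ->
  C (step u p.1 p.2) -> C (step u q.1 q.2) -> C (step u r.1 r.2) -> r \in [:: p; q].
Proof.
move=> u1 pq Cp Cq Cr; apply: (set_sub_seq_of_card (A := nbrs C 0 u)).
- by rewrite /= inE pq.
- by move=> d; rewrite mem_seq2 => /orP [] /eqP ->; apply/nbrsP/code_layer0.
- by rewrite card_layer1_nbrs0.
- exact/nbrsP/code_layer0.
Qed.

Lemma layer1_no_three_code_nbrs u p q r : in_layer C 1 u -> uniq [:: p; q; r] ->
  C (step u p.1 p.2) -> C (step u q.1 q.2) -> C (step u r.1 r.2) -> False.
Proof.
move=> u1 U Cp Cq Cr; move: U; rewrite /= !inE !negb_or => /and3P [/andP [pq pr] qr _].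
by move: (layer1_code_nbrs u1 pq Cp Cq Cr); rewrite !inE !(eq_sym r) (negbTE pr) (negbTE qr).
Qed.

Lemma layer1_other_code_nbr u p : alpha 1 0 = 2%N -> in_layer C 1 u ->
  exists r, C (step u r.1 r.2) /\ r != p.
Proof.
move=> c1_2 u1.
have [|r /nbrsP /layer0_code Cr] := exists_notin_of_card (s := [:: p]) (A := nbrs C 0 u).
  by rewrite card_layer1_nbrs0 // c1_2.
by rewrite inE => rp; exists r.
Qed.

Lemma layer1_code_nbr_of_sub u p q : alpha 1 0 = 2%N -> in_layer C 1 u ->
  (forall r, C (step u r.1 r.2) -> r \in [:: p; q]) -> C (step u p.1 p.2).
Proof.
move=> c1_2 u1 sub; apply: layer0_code; apply/nbrsP.
have /(_ p) : {subset [:: p; q] <= nbrs C 0 u}.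
  apply: seq_sub_set_of_card; first by move=> r /nbrsP /layer0_code /sub.
  by rewrite card_layer1_nbrs0 // c1_2.
by apply; rewrite mem_head.
Qed.

Lemma layer2_layer1_nbrs x p q r d : in_layer C 2 x -> uniq [:: p; q; r] ->
  in_layer C 1 (step x p.1 p.2) -> in_layer C 1 (step x q.1 q.2) ->
  in_layer C 1 (step x r.1 r.2) -> in_layer C 1 (step x d.1 d.2) -> d \in [:: p; q; r].
Proof.
move=> x2 U xp xq xr xd; apply: (set_sub_seq_of_card (A := nbrs C 1 x) U).
- by move=> e; rewrite mem_seq3 => /or3P [] /eqP ->; apply/nbrsP.
- by rewrite card_layer2_nbrs1.
- exact/nbrsP.
Qed.

Lemma layer2_no_four_layer1_nbrs x p q r d : in_layer C 2 x -> uniq [:: p; q; r; d] ->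
  in_layer C 1 (step x p.1 p.2) -> in_layer C 1 (step x q.1 q.2) ->
  in_layer C 1 (step x r.1 r.2) -> in_layer C 1 (step x d.1 d.2) -> False.
Proof.
move=> x2 U xp xq xr xd.
suff : (size [:: p; q; r; d] <= #|nbrs C 1 x|)%N by rewrite card_layer2_nbrs1.
by apply: uniq_size_le_card U _ => e; rewrite mem_seq4 => /or4P [] /eqP ->; apply/nbrsP.
Qed.

Lemma layer2_third_layer1_nbr x p q : in_layer C 2 x ->
  exists r, in_layer C 1 (step x r.1 r.2) /\ r \notin [:: p; q].
Proof.
move=> x2; have [|r /nbrsP xr rpq] := exists_notin_of_card (s := [:: p; q]) (A := nbrs C 1 x).
  by rewrite card_layer2_nbrs1.
by exists r.
Qed.

Lemma code_notin_double_unit i e : ~ C (step (step 0 i e) i e).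
Proof.
move=> Cw; have [k ki] := exists_other_ord i n_gt1.
set u := step 0 i e in Cw.
have u1 : in_layer C 1 u := unit_layer1 i e.
have Cu0 : C (step u i (~~ e)) by rewrite stepK.
have c1_2 : alpha 1 0 = 2%N.
  by apply: (layer1_code_nbrs_eq2 (p := (i, ~~ e)) (q := (i, e)) u1 _ Cu0 Cw); dirs_uniq.
(* the second codeword neighbour of [s e_k] is [s e_k - e e_i] *)
have back s : C (step (step 0 k s) i (~~ e)).
  set x := step u k s.
  have nCx : ~ C x.
    move=> Cx.
    apply: (layer1_no_three_code_nbrs (p := (i, ~~ e)) (q := (i, e)) (r := (k, s)) u1) => //.
    by dirs_uniq.
  have [r [Cr rk]] := layer1_other_code_nbr (k, ~~ s) c1_2 (unit_layer1 k s).
  have : r \in [:: (k, ~~ s); (i, ~~ e); (i, e)].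
    apply: (layer2_layer1_nbrs (step2_layer2 nCx)) => /=.
    - by dirs_uniq.
    - by rewrite stepK.
    - by rewrite /x /u stepC stepK; exact: unit_layer1.
    - by rewrite /x stepC; exact: code_step_layer1.
    - by rewrite /x /u [step (step 0 i e) k s]stepC stepC; exact: code_step_layer1.
  rewrite !inE (negbTE rk) /= => /orP [] /eqP rE; rewrite rE /= in Cr => //.
  by case: nCx; rewrite /x /u stepC.
apply: (layer1_no_three_code_nbrs (p := (i, e)) (q := (k, true)) (r := (k, false))
  (unit_layer1 i (~~ e))).
- by dirs_uniq.
- by rewrite stepNK.
- by rewrite stepC; apply: back.
- by rewrite stepC; apply: back.
Qed.

Lemma code_pair_third_axis k a m b l g p : k != m -> C (step (step 0 k a) m b) ->
  l != k -> l != m -> C (step (step 0 l g) p.1 p.2) -> p != (l, ~~ g) -> p = (k, ~~ a).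
Proof.
move=> km Cw lk lm Cp pl; set u := step 0 k a in Cw.
have u1 : in_layer C 1 u := unit_layer1 k a.
have nCx : ~ C (step u l g).
  move=> Cx.
  apply: (layer1_no_three_code_nbrs (p := (k, ~~ a)) (q := (m, b)) (r := (l, g)) u1) => //.
  - by dirs_uniq.
  - by rewrite stepK.
have : p \in [:: (l, ~~ g); (k, ~~ a); (m, b)].
  apply: (layer2_layer1_nbrs (step2_layer2 nCx)) => /=.
  - by dirs_uniq.
  - by rewrite stepK.
  - by rewrite /u stepC stepK; exact: unit_layer1.
  - by rewrite stepC; exact: code_step_layer1.
  - by rewrite /u [step (step 0 k a) l g]stepC stepC; exact: code_step_layer1.
rewrite !inE (negbTE pl) /= => /orP [/eqP //|/eqP pE]; exfalso.
rewrite pE /= in Cp.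
apply: (layer1_no_three_code_nbrs (p := (m, ~~ b)) (q := (k, a)) (r := (l, g))
  (unit_layer1 m b)) => /=.
- by dirs_uniq.
- by rewrite stepK.
- by rewrite stepC.
- by rewrite stepC.
Qed.

Section TwoAxes.

(* The case n = 2, where all four neighbours of every vertex are at hand. *)

Variables (k m : 'I_n) (a b : bool).
Hypothesis km : k != m.
Hypothesis axes : forall l, (l == k) || (l == m).
Hypothesis c1_2 : alpha 1 0 = 2%N.
Hypothesis Cw : C (step (step 0 k a) m b).

Lemma two_axes_other_dirs p : p != (k, ~~ a) -> p != (m, b) -> p \in [:: (k, a); (m, ~~ b)].
Proof.
case: p => l d; rewrite !inE !xpair_eqE.
case/orP: (axes l) => /eqP ->; rewrite eqxx ?(negbTE km) ?(eq_sym m) ?(negbTE km) /=.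
  by case: (a); case: d.
by case: (b); case: d.
Qed.

Lemma two_axes_skew_notin : ~ C (step (step 0 k a) m (~~ b)).
Proof.
move=> Cs; have : (m, ~~ b) \in [:: (k, ~~ a); (m, b)].
  apply: (layer1_code_nbrs (unit_layer1 k a)) => //=; last by rewrite stepK.
  by dirs_uniq.
by rewrite !inE !xpair_eqE eq_sym (negbTE km) eqxx /=; case: (b).
Qed.

Lemma two_axes_layer1 : in_layer C 1 (step (step (step 0 k a) m (~~ b)) k a).
Proof.
have [r [Qr]] := layer2_third_layer1_nbr (m, b) (k, ~~ a) (step2_layer2 two_axes_skew_notin).
rewrite !inE negb_or => /andP [rm rk].
move: (two_axes_other_dirs rk rm); rewrite !inE => /orP [] /eqP rE; rewrite rE in Qr => //.
apply: (layer1_of_code_step (i := m) (b := ~~ b)); rewrite stepC.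
apply: (layer1_code_nbr_of_sub (p := (k, a)) (q := (m, ~~ b)) c1_2 Qr) => d Cd.
apply: two_axes_other_dirs; apply: contraPneq Cd => -> /=.
  have -> : step (step (step (step 0 k a) m (~~ b)) m (~~ b)) k (~~ a) =
            step (step 0 m (~~ b)) m (~~ b) by steps_eq.
  exact: code_notin_double_unit.
by rewrite stepNK; exact: two_axes_skew_notin.
Qed.

Lemma two_axes_contra : False.
Proof.
have CP : C (step (step (step (step 0 k a) m (~~ b)) k a) k a).
  apply: (layer1_code_nbr_of_sub (p := (k, a)) (q := (m, ~~ b)) c1_2 two_axes_layer1) => d Cd.
  apply: two_axes_other_dirs; apply: contraPneq Cd => -> /=.
    by rewrite stepK; exact: two_axes_skew_notin.
  have -> : step (step (step (step 0 k a) m (~~ b)) k a) m b = step (step 0 k a) k a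
    by steps_eq.
  exact: code_notin_double_unit.
apply: (layer2_no_four_layer1_nbrs (p := (k, ~~ a)) (q := (m, b)) (r := (m, ~~ b)) (d := (k, a))
  (step2_layer2 (@code_notin_double_unit k a))) => /=.
- by dirs_uniq.
- by rewrite stepK; exact: unit_layer1.
- by rewrite stepC; exact: code_step_layer1.
- by rewrite stepC; exact: two_axes_layer1.
- apply: (layer1_of_code_step (i := m) (b := ~~ b)).
  by rewrite stepC [step (step (step 0 k a) k a) _ _]stepC.
Qed.

End TwoAxes.

Lemma code_notin_pair k a m b : k != m -> ~ C (step (step 0 k a) m b).
Proof.
move=> km Cw; have mk : m != k by rewrite eq_sym.
have c1_2 : alpha 1 0 = 2%N.
  apply: (layer1_code_nbrs_eq2 (p := (k, ~~ a)) (q := (m, b)) (unit_layer1 k a)) => //=.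
  - by dirs_uniq.
  - by rewrite stepK.
have [/existsP [l /andP [lk lm]]|/existsPn axes] := boolP [exists l, (l != k) && (l != m)].
  (* the second codeword neighbour of [e_l] would be both [e_l - a e_k] and [e_l - b e_m] *)
  have [p [Cp pl]] := layer1_other_code_nbr (l, ~~ true) c1_2 (unit_layer1 l true).
  have Cw' : C (step (step 0 m b) k a) by rewrite stepC.
  have := code_pair_third_axis km Cw lk lm Cp pl.
  have := code_pair_third_axis mk Cw' lm lk Cp pl.
  by move=> -> [mEk]; rewrite mEk eqxx in km.
apply: (two_axes_contra km _ c1_2 Cw) => l.
by move: (axes l); rewrite negb_and !negbK.
Qed.

Lemma code_notin_step2 i b j c : (j, c) != (i, ~~ b) -> ~ C (step (step 0 i b) j c).
Proof.
have [->|ji] := eqVneq j i; last by move=> _; rewrite stepC; exact: code_notin_pair.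
rewrite xpair_eqE eqxx /= => cb; have -> : c = b by move: cb; case: b; case: c.
exact: code_notin_double_unit.
Qed.

Lemma cap_code_unique i b x y : cap i b x -> cap i b y -> C x -> C y -> x = y.
Proof.
move=> [j [c [ji ->]]] [j' [c' [j'i ->]]]; rewrite cap_centerE => Cx Cy.
have [[-> ->] //|jc] := eqVneq (j, c) (j', c'); exfalso.
apply: (layer2_no_four_layer1_nbrs (p := (i, ~~ b)) (q := (i, b)) (r := (j, c)) (d := (j', c'))
  (step2_layer2 (@code_notin_double_unit i b))) => /=.
- by dirs_uniq.
- by rewrite stepK; exact: unit_layer1.
- exact: layer1_of_code_step Cx.
- by apply: (layer1_of_code_step (i := i) (b := b)); rewrite stepC.
- by apply: (layer1_of_code_step (i := i) (b := b)); rewrite stepC.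
Qed.

Lemma card_type3100_code (s : seq (vec n)) : uniq s ->
  (forall x, x \in s -> C x /\ type3100 x) -> (size s <= 2 * n)%N.
Proof.
move=> us sC; pose p0 := (Ordinal (ltnW n_gt1), true).
pose f x := odflt p0 [pick p : 'I_n * bool | `[< cap p.1 p.2 x >]].
have fP x : x \in s -> cap (f x).1 (f x).2 x.
  move=> /sC [_ /type3100_cap [i [b capx]]]; rewrite /f.
  by case: pickP => [p /asboolP //|/(_ (i, b))]; rewrite (asboolT capx).
have f_inj : {in s &, injective f}.
  move=> x y xs ys fxy; apply: (cap_code_unique (fP x xs)); last exact: (sC y ys).1.
    by rewrite fxy; exact: fP.
  exact: (sC x xs).1.
rewrite -(size_map f) -(card_uniqP _) ?map_inj_in_uniq //.
by apply: leq_trans (max_card _) _; rewrite card_prod card_ord card_bool mulnC.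
Qed.

Section Type1100.

Variables (i j : 'I_n) (s t : bool).
Hypothesis ij : i != j.
Local Notation x := (step (step 0 i s) j t).
Hypothesis x2 : in_layer C 2 x.

Lemma type1100_unit_nbrs : in_layer C 1 (step x i (~~ s)) /\ in_layer C 1 (step x j (~~ t)).
Proof. by rewrite stepK stepC stepK; split; exact: unit_layer1. Qed.

Lemma type1100_code_dist2 p q : in_layer C 1 (step x p.1 p.2) ->
  p \notin [:: (i, ~~ s); (j, ~~ t)] -> C (step (step x p.1 p.2) q.1 q.2) -> q = p.
Proof.
move=> xp; rewrite !inE negb_or => /andP [pi pj] Cq; have [xi xj] := type1100_unit_nbrs.
have : q \in [:: (i, ~~ s); (j, ~~ t); p].
  apply: (layer2_layer1_nbrs (p := (i, ~~ s)) (q := (j, ~~ t)) x2 _ xi xj xp) => //=.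
    by dirs_uniq.
  by apply: (layer1_of_code_step (i := p.1) (b := p.2)); rewrite stepC.
rewrite !inE => /or3P [] /eqP qE //; rewrite qE /= stepC in Cq; exfalso.
  by move: Cq; rewrite [step x _ _]stepC stepK; apply: code_notin_step2.
by move: Cq; rewrite stepK; apply: code_notin_step2.
Qed.

Lemma type1100_code_dir p : in_layer C 1 (step x p.1 p.2) ->
  p \notin [:: (i, ~~ s); (j, ~~ t)] -> C (step (step x p.1 p.2) p.1 p.2) ->
  p \in [:: (i, s); (j, t)].
Proof.
case: p => l d /=; rewrite !inE !xpair_eqE negb_or => xp + Cp.
have [->|li] := eqVneq l i; first by rewrite (negbTE ij) /=; case: (s); case: (d).
have [_|lj] := eqVneq l j; first by case: (t); case: (d).
move=> _; exfalso.
apply: (layer2_no_four_layer1_nbrs (p := (l, ~~ d)) (q := (i, ~~ s)) (r := (j, t)) (d := (l, d))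
  (step2_layer2 (@code_notin_step2 i s l d _))) => /=.
- by rewrite xpair_eqE (negbTE li).
- by dirs_uniq.
- by rewrite stepK; exact: unit_layer1.
- by rewrite stepC stepK; exact: unit_layer1.
- by rewrite stepC.
- apply: (layer1_of_code_step (i := j) (b := t)).
  by rewrite stepC [step (step (step 0 i s) l d) j t]stepC.
Qed.

Lemma type1100_code_weight4_eq p z : in_layer C 1 (step x p.1 p.2) ->
  p \notin [:: (i, ~~ s); (j, ~~ t)] -> C z -> weight z = 4%N -> dist x z = 2%N ->
  z = step (step x p.1 p.2) p.1 p.2.
Proof.
move=> xp pN Cz Wz /dist_eq2 [i1 [b1 [i2 [b2 zE]]]]; have [xi xj] := type1100_unit_nbrs.
have : (i1, b1) \in [:: (i, ~~ s); (j, ~~ t); p].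
  apply: (layer2_layer1_nbrs (p := (i, ~~ s)) (q := (j, ~~ t)) x2 _ xi xj xp) => /=.
    move: pN; rewrite /= !inE !negb_or ![p == _]eq_sym => /andP [-> ->].
    by rewrite xpair_eqE (negbTE ij).
  by apply: (layer1_of_code_step (i := i2) (b := b2)); rewrite -zE.
rewrite !inE => /or3P [] /eqP q1E; move: Wz; rewrite zE.
- case: q1E => -> ->; rewrite [step x _ _]stepC stepK.
  by have := weight_step2_le j t i2 b2; lia.
- case: q1E => -> ->; rewrite stepK.
  by have := weight_step2_le i s i2 b2; lia.
- move=> _; have q2E : (i2, b2) = p.
    by apply: (type1100_code_dist2 xp pN); rewrite -q1E /= -zE.
  by move: q2E; rewrite -q1E => -[-> ->].
Qed.

Lemma type1100_code_weight4 : exists y,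
  (C y /\ weight y = 4%N /\ dist x y = 2%N) /\ type3100 y /\
  (forall z, C z -> weight z = 4%N -> dist x z = 2%N -> z = y).
Proof.
have [p [xp pN]] := layer2_third_layer1_nbr (i, ~~ s) (j, ~~ t) x2.
have Cy : C (step (step x p.1 p.2) p.1 p.2).
  have [[w [Cw /dist_eq1 [l [d wE]]]] _] := xp; rewrite wE in Cw.
  have ldp := type1100_code_dist2 (q := (l, d)) xp pN Cw.
  by move: Cw; rewrite -ldp.
have [Ty Wy] : type3100 (step (step x p.1 p.2) p.1 p.2) /\
               weight (step (step x p.1 p.2) p.1 p.2) = 4%N.
  move: (type1100_code_dir xp pN Cy); rewrite !inE => /orP [] /eqP -> /=.
    exact: type3100_step4.
  by rewrite [step (step 0 i s) j t]stepC; apply: type3100_step4; rewrite eq_sym.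
exists (step (step x p.1 p.2) p.1 p.2).
split; last by split=> // z; apply: type1100_code_weight4_eq.
do 2!split=> //; apply/eqP; rewrite eqn_leq x2.2 // andbT.
by have := dist_triangle x (step x p.1 p.2) (step (step x p.1 p.2) p.1 p.2); rewrite !dist_step.
Qed.

End Type1100.

End TwoNullCRC.

Theorem mainTheorem4 (n : nat) (C : code n) (rho : nat) (alpha : nat -> nat -> nat) :
  (2 <= n)%N ->
  is_CRC C rho alpha ->
  r_null alpha 2 ->
  (2 <= rho)%N ->
  (c_ alpha 1 <= 2)%N ->
  c_ alpha 2 = 3%N ->
  C 0 ->
  ((forall (i : 'I_n) (b : bool) (x y : vec n),
       cap i b x -> cap i b y -> C x -> C y -> x = y) /\
   (forall s : seq (vec n), uniq s ->
       (forall x, x \in s -> C x /\ type3100 x) -> (size s <= 2 * n)%N)) /\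
  (forall x : vec n, type1100 x -> in_layer C 2 x ->
     exists y : vec n,
       (C y /\ weight y = 4%N /\ dist x y = 2%N) /\ type3100 y /\
       (forall z, C z -> weight z = 4%N -> dist x z = 2%N -> z = y)).
Proof.
move=> n_gt1 [_ [card_nbrs _]] null rho_ge2 c1 c2 code0.
have {}card_nbrs i j x : (i <= 2)%N -> (j <= 2)%N -> in_layer C i x ->
    #|nbrs C j x| = alpha i j.
  by move=> i2 j2; apply: card_nbrs; exact: leq_trans rho_ge2.
have a0 : alpha 0 0 = 0%N := null 0%N isT.
have a1 : alpha 1 1 = 0%N := null 1%N isT.
split; first split.
- by move=> i b x y; apply: (cap_code_unique n_gt1 code0 card_nbrs a0 a1 c1 c2).
- exact: (card_type3100_code n_gt1 code0 card_nbrs a0 a1 c1 c2).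
- move=> _ /type1100_step2 [i [j [s [t [ij ->]]]]].
  exact: (type1100_code_weight4 n_gt1 code0 card_nbrs a0 a1 c1 c2 ij).
Qed.
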